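(* Let $G$ be a connected $(P_6,C_5)$-free graph, and suppose $G$ contains a chromatic cutset $S$ that is also a minimal separator. Let $(S_1,\dots,S_t)$ be a partition of $S$ into 1-chromatic sets that are pairwise complete to each other, and let $G'$ be obtained from $G$ by contracting each $S_i$ into a new vertex $s_i$ (i.e., replacing $S_i$ by a vertex $s_i$ whose neighborhood is exactly the set of vertices outside $S_i$ having a neighbor in $S_i$). Then $G'$ is $(P_6,C_5)$-free.
   Context: Graphs are finite and simple. A graph is $(P_6,C_5)$-free if it has no induced 6-vertex path and no induced 5-cycle. A set $S\subseteq V(G)$ is 1-chromatic if $S$ is an independent set and in every 4-coloring of $G$ all vertices of $S$ receive the same color. A set $S$ is a cutset if $G$ is connected and $G-S$ is disconnected. A cutset $S$ is a chromatic cutset if it admits a partition into 1-chromatic sets that are pairwise complete to each other (every vertex of one part adjacent to every vertex of another). A cutset $S$ is a minimal separator if there are two distinct connected components $K,K'$ of $G-S$ such that every vertex of $S$ has a neighbor in $K$ and a neighbor in $K'$. *)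

(* A graph is a symmetric irreflexive relation e on a finType,
   optionally restricted to a vertex set V. *)
From mathcomp Require Import all_boot.
Set Implicit Arguments. Unset Strict Implicit. Unset Printing Implicit Defensive.

Section Graphs.
Variable T : finType.

Definition simple_graph (e : rel T) : Prop :=
  (forall x y, e x y = e y x) /\ (forall x, ~~ e x x).

Definition has_induced_P6 (V : {set T}) (e : rel T) : Prop :=
  exists f : 'I_6 -> T, injective f /\ (forall i, f i \in V) /\
    (forall i j : 'I_6, e (f i) (f j) = ((i.+1 == j) || (j.+1 == i))).

Definition has_induced_C5 (V : {set T}) (e : rel T) : Prop :=
  exists f : 'I_5 -> T, injective f /\ (forall i, f i \in V) /\
    (forall i j : 'I_5, e (f i) (f j) =
        ((i.+1 %% 5 == j) || (j.+1 %% 5 == i))).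

Definition P6C5_free (V : {set T}) (e : rel T) : Prop :=
  ~ has_induced_P6 V e /\ ~ has_induced_C5 V e.

Definition connected_graph (e : rel T) : Prop := forall x y, connect e x y.

Definition del_rel (e : rel T) (S : {set T}) : rel T :=
  [rel x y | [&& e x y, x \notin S & y \notin S]].

Definition independent (e : rel T) (S : {set T}) : Prop :=
  forall x y, x \in S -> y \in S -> ~~ e x y.

Definition four_coloring (e : rel T) (c : T -> 'I_4) : Prop :=
  forall x y, e x y -> c x != c y.

Definition one_chromatic (e : rel T) (S : {set T}) : Prop :=
  independent e S /\
  forall c, four_coloring e c -> forall x y, x \in S -> y \in S -> c x = c y.

Definition complete_to (e : rel T) (A B : {set T}) : Prop :=
  forall x y, x \in A -> y \in B -> e x y.

Definition cutset (e : rel T) (S : {set T}) : Prop :=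
  connected_graph e /\
  exists a b, [/\ a \notin S, b \notin S & ~~ connect (del_rel e S) a b].

(* component of G - S containing a (a outside S) *)
Definition comp (e : rel T) (S : {set T}) (a : T) : {set T} :=
  [set u | connect (del_rel e S) a u].

Definition minimal_separator (e : rel T) (S : {set T}) : Prop :=
  cutset e S /\
  exists a b, [/\ a \notin S, b \notin S, ~~ connect (del_rel e S) a b &
    forall v, v \in S ->
      (exists2 u, u \in comp e S a & e v u) /\
      (exists2 u, u \in comp e S b & e v u)].

Definition is_partition (t : nat) (P : 'I_t -> {set T}) (S : {set T}) : Prop :=
  [/\ forall i, P i != set0,
      forall i j, i != j -> [disjoint P i & P j] &
      forall x, (x \in S) = [exists i, x \in P i]].

Definition chromatic_cutset (e : rel T) (S : {set T}) : Prop :=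
  cutset e S /\
  exists t (P : 'I_t -> {set T}),
    [/\ is_partition P S, forall i, one_chromatic e (P i) &
        forall i j, i != j -> complete_to e (P i) (P j)].

(* Contraction: vertices inl v (v outside S) and inr i (the new vertex s_i). *)
Definition contr_rel (e : rel T) (t : nat) (P : 'I_t -> {set T})
  : rel (T + 'I_t)%type :=
  fun x y => match x, y with
  | inl u, inl v => e u v
  | inl u, inr i => [exists w in P i, e u w]
  | inr i, inl v => [exists w in P i, e v w]
  | inr i, inr j => (i != j) && [exists u in P i, exists w in P j, e u w]
  end.

Definition contr_vertices (t : nat) (S : {set T}) : {set (T + 'I_t)%type} :=
  [set x | match x with inl v => v \notin S | inr _ => true end].

End Graphs.

From Pilot Require Import Defs.
From mathcomp Require Import all_boot.
Set Implicit Arguments. Unset Strict Implicit. Unset Printing Implicit Defensive.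

(* Let f embed a pattern H (P6 or C5) as an induced subgraph of the contraction.
   If every contracted vertex s_k of the copy can be replaced by a vertex of S_k
   adjacent to all its neighbours on the copy, the replacements give an induced H
   in G: distinct parts are complete to each other and a part has no neighbour
   outside the neighbourhood of its s_k.  Otherwise, since H has maximum degree 2,
   s_k has two neighbours a, b on the copy and S_k contains w1, w2 with
   w1 ~ a, w1 !~ b and w2 ~ b, w2 !~ a.  One of a, b, say b, is the end of an
   induced path l1 l2 b of H avoiding the closed neighbourhood of s_k.  As S is a
   minimal separator, some component K of G - S avoiding b is full, and inside K
   one finds q ~ w2 and r ~ q with r !~ w2 and r in K or r = w1.  Then
   l1 l2 b w2 q r is an induced P6 of G. *)

Definition path_adj : rel nat := fun i j => (i.+1 == j) || (j.+1 == i).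
Definition cycle_adj (n : nat) : rel nat :=
  fun i j => (i.+1 %% n == j) || (j.+1 %% n == i).

Definition has_induced (T : finType) (V : {set T}) (e : rel T) (n : nat)
    (pat : rel nat) : Prop :=
  exists f : 'I_n -> T, injective f /\ (forall i, f i \in V) /\
    (forall i j : 'I_n, e (f i) (f j) = pat i j).

Lemma all_iotaP n (p : pred nat) : all p (iota 0 n) -> forall i : 'I_n, p i.
Proof. by move=> /allP p_all i; apply: p_all; rewrite mem_iota ltn_ord. Qed.

Lemma has_iotaP n (p : pred nat) : has p (iota 0 n) -> exists i : 'I_n, p i.
Proof.
by case/hasP=> i; rewrite mem_iota => /andP[_ lt_in] pi; exists (Ordinal lt_in).
Qed.

Section Patterns.
Variables (n : nat) (pat : rel nat).
Local Notation I := (iota 0 n).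

(* Quantifiers range over [iota 0 n] so that the properties of concrete
   patterns can be decided by [vm_compute]. *)
Definition separating_pattern : bool :=
  all (fun i => all (fun j => (i != j) ==> has (fun k => pat i k != pat j k) I) I) I.

Definition max_degree2 : bool :=
  all (fun i => all (fun j1 => all (fun j2 => all (fun j3 =>
    [&& pat i j1, pat i j2, pat i j3 & j1 != j2] ==> (j3 == j1) || (j3 == j2))
  I) I) I) I.

Definition far_tail (i j p1 p2 : nat) : bool :=
  [&& (p1 != i) && ~~ pat i p1, (p2 != i) && ~~ pat i p2,
      pat p1 p2, pat p2 j & ~~ pat p1 j].

Definition far_tails : bool :=
  all (fun i => all (fun j1 => all (fun j2 =>
    [&& pat i j1, pat i j2 & j1 != j2] ==>
    has (fun p1 => has (fun p2 => far_tail i j1 p1 p2 || far_tail i j2 p1 p2) I) I)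
  I) I) I.

Lemma separating_patternP : separating_pattern ->
  forall i j : 'I_n, i != j -> exists k : 'I_n, pat i k != pat j k.
Proof.
by move=> sep i j nij; move: (all_iotaP sep i) => /all_iotaP/(_ j);
  rewrite nij => /has_iotaP.
Qed.

Lemma max_degree2P : max_degree2 -> forall i j1 j2 j3 : 'I_n,
  pat i j1 -> pat i j2 -> pat i j3 -> j1 != j2 -> j3 = j1 \/ j3 = j2.
Proof.
move=> deg2 i j1 j2 j3 ij1 ij2 ij3 n12.
move: (all_iotaP deg2 i) => /all_iotaP/(_ j1)/all_iotaP/(_ j2)/all_iotaP/(_ j3).
by rewrite ij1 ij2 ij3 n12 => /orP[] /eqP/val_inj; [left | right].
Qed.

Lemma far_tailsP : far_tails -> forall i j1 j2 : 'I_n,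
  pat i j1 -> pat i j2 -> j1 != j2 ->
  exists p1 p2 : 'I_n, far_tail i j1 p1 p2 \/ far_tail i j2 p1 p2.
Proof.
move=> tails i j1 j2 ij1 ij2 n12.
move: (all_iotaP tails i) => /all_iotaP/(_ j1)/all_iotaP/(_ j2).
rewrite ij1 ij2 n12 => /has_iotaP[p1 /has_iotaP[p2 /orP tail]].
by exists p1, p2.
Qed.

Lemma pattern_inj (T : finType) (e : rel T) (g : 'I_n -> T) :
  separating_pattern -> (forall i j, e (g i) (g j) = pat i j) -> injective g.
Proof.
move=> sep g_adj i j gij; apply/eqP; apply: contraT => nij.
by have [k] := separating_patternP sep nij; rewrite -!g_adj gij eqxx.
Qed.

End Patterns.

Lemma separating_path6 : separating_pattern 6 path_adj.
Proof. by vm_compute. Qed.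

Lemma max_degree2_path6 : max_degree2 6 path_adj.
Proof. by vm_compute. Qed.

Lemma far_tails_path6 : far_tails 6 path_adj.
Proof. by vm_compute. Qed.

Lemma max_degree2_cycle5 : max_degree2 5 (cycle_adj 5).
Proof. by vm_compute. Qed.

Lemma far_tails_cycle5 : far_tails 5 (cycle_adj 5).
Proof. by vm_compute. Qed.

Lemma connect_inv (T : finType) (r : rel T) (X : pred T) :
  (forall x y, X x -> r x y -> X y) -> forall x y, connect r x y -> X x -> X y.
Proof.
move=> X_inv x y /connectP[p + ->]; elim: p x => //= z p IHp x /andP[rxz r_p] Xx.
exact: IHp r_p (X_inv _ _ Xx rxz).
Qed.

Section Graph.
Variables (T : finType) (e : rel T).
Hypotheses (e_sym : symmetric e) (e_irr : irreflexive e).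

Lemma induced_P6_of_path v0 v1 v2 v3 v4 v5 :
  e v0 v1 -> e v1 v2 -> e v2 v3 -> e v3 v4 -> e v4 v5 ->
  ~~ e v0 v2 -> ~~ e v0 v3 -> ~~ e v0 v4 -> ~~ e v0 v5 ->
  ~~ e v1 v3 -> ~~ e v1 v4 -> ~~ e v1 v5 ->
  ~~ e v2 v4 -> ~~ e v2 v5 -> ~~ e v3 v5 ->
  has_induced [set: T] e 6 path_adj.
Proof.
move=> e01 e12 e23 e34 e45 /negbTE n02 /negbTE n03 /negbTE n04 /negbTE n05
  /negbTE n13 /negbTE n14 /negbTE n15 /negbTE n24 /negbTE n25 /negbTE n35.
pose f (i : 'I_6) := nth v0 [:: v0; v1; v2; v3; v4; v5] i.
have f_adj i j : e (f i) (f j) = path_adj i j.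
  by case: i => [[|[|[|[|[|[|//]]]]]] ?]; case: j => [[|[|[|[|[|[|//]]]]]] ?];
    rewrite /f /path_adj /= ?e_irr //
      ?(e01, e12, e23, e34, e45, n02, n03, n04, n05, n13, n14, n15, n24, n25, n35) //
      e_sym ?(e01, e12, e23, e34, e45, n02, n03, n04, n05, n13, n14, n15, n24, n25, n35).
exists f; split; first exact: pattern_inj separating_path6 f_adj.
by split=> // i; rewrite inE.
Qed.

Variable S : {set T}.

Lemma connect_del_sym : connect_sym (del_rel e S).
Proof.
by apply: sym_connect_sym => x y; rewrite /del_rel /= e_sym; congr (_ && _); exact: andbC.
Qed.

Lemma comp_notin (a u : T) : a \notin S -> u \in Defs.comp e S a -> u \notin S.
Proof.
move=> aS; rewrite inE => a_u.
by apply: (connect_inv (X := fun x => x \notin S) _ a_u) => // x y _ /and3P[].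
Qed.

Lemma comp_step (a u y : T) :
  a \notin S -> u \in Defs.comp e S a -> y \notin S -> e u y -> y \in Defs.comp e S a.
Proof.
move=> aS uK yS euy; have uS := comp_notin aS uK.
move: uK; rewrite !inE => /connect_trans; apply; apply: connect1.
by rewrite /del_rel /= euy uS.
Qed.

Lemma comp_no_edge_out (a x y : T) :
  a \notin S -> x \in Defs.comp e S a -> y \notin S -> y \notin Defs.comp e S a -> ~~ e x y.
Proof. by move=> aS xK yS; apply: contra => /(comp_step aS xK yS). Qed.

(* Otherwise w2 stays adjacent along a path of the component from its own
   neighbour to a neighbour u of w1, and q := u, r := w1 work. *)
Lemma comp_P3 (a w1 w2 : T) : a \notin S -> ~~ e w1 w2 ->
  (exists2 u, u \in Defs.comp e S a & e w1 u) -> (exists2 u, u \in Defs.comp e S a & e w2 u) ->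
  exists q r, [/\ q \in Defs.comp e S a, e w2 q, e q r, ~~ e w2 r &
                 (r \in Defs.comp e S a) || (r == w1)].
Proof.
set K := Defs.comp e S a => aS n12 [u1 u1K e1u1] [u0 u0K e2u0].
have [|none] := boolP [exists q, exists r,
  [&& q \in K, e w2 q, e q r, ~~ e w2 r & (r \in K) || (r == w1)]].
  by case/existsP=> q /existsP[r /and5P[]]; exists q, r.
have K_nbr x y : (x \in K) && e w2 x -> del_rel e S x y -> (y \in K) && e w2 y.
  move=> /andP[xK e2x] /and3P[exy _ yS]; have yK := comp_step aS xK yS exy.
  rewrite yK; apply: contraNT none => n2y.
  by apply/existsP; exists x; apply/existsP; exists y; rewrite xK e2x exy n2y yK.
have u0u1 : connect (del_rel e S) u0 u1.
  by move: u0K u1K; rewrite !inE connect_del_sym => /connect_trans; apply.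
have /andP[_ e2u1] := connect_inv K_nbr u0u1 (introT andP (conj u0K e2u0)).
by exists u1, w1; split; rewrite ?eqxx ?orbT // e_sym.
Qed.

Hypothesis S_minsep : minimal_separator e S.

Lemma full_comp_avoiding (b : T) : exists a, [/\ a \notin S, b \notin Defs.comp e S a &
  forall v, v \in S -> exists2 u, u \in Defs.comp e S a & e v u].
Proof.
case: S_minsep => _ [a0 [b0 [a0S b0S nab full]]].
have [a0b|na0b] := boolP (connect (del_rel e S) a0 b); last first.
  by exists a0; split; rewrite ?inE // => v /full[].
exists b0; split=> [||v /full[]] //; rewrite inE.
by apply: contra nab; rewrite connect_del_sym => /(connect_trans a0b).
Qed.

Lemma separator_P6 w1 w2 l1 l2 b :
  w1 \in S -> w2 \in S -> ~~ e w1 w2 ->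
  l1 \notin S -> l2 \notin S -> b \notin S ->
  e l1 l2 -> e l2 b -> ~~ e l1 b -> e w2 b -> ~~ e w1 b ->
  ~~ e w1 l1 -> ~~ e w1 l2 -> ~~ e w2 l1 -> ~~ e w2 l2 ->
  has_induced [set: T] e 6 path_adj.
Proof.
move=> w1S w2S nw1w2 l1S l2S bS el1l2 el2b nl1b ew2b nw1b nw1l1 nw1l2 nw2l1 nw2l2.
have [a [aS bK full]] := full_comp_avoiding b.
have [q [r [qK ew2q eqr nw2r rK]]] := comp_P3 aS nw1w2 (full _ w1S) (full _ w2S).
have l2K : l2 \notin Defs.comp e S a.
  by apply: contra bK => l2K; apply: comp_step aS l2K bS el2b.
have l1K : l1 \notin Defs.comp e S a.
  by apply: contra l2K => l1K; apply: comp_step aS l1K l2S el1l2.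
have nq y : y \notin S -> y \notin Defs.comp e S a -> ~~ e y q.
  by move=> yS yK; rewrite e_sym; apply: comp_no_edge_out aS qK yS yK.
have nr y : y \notin S -> y \notin Defs.comp e S a -> ~~ e w1 y -> ~~ e y r.
  move=> yS yK nw1y; rewrite e_sym.
  by case/orP: rK => [rK|/eqP->] //; apply: comp_no_edge_out aS rK yS yK.
apply: (induced_P6_of_path el1l2 el2b _ ew2q eqr) => //; rewrite ?nq ?nr //;
  by rewrite e_sym.
Qed.

Section Contraction.
Variables (t : nat) (P : 'I_t -> {set T}).
Hypotheses (P_part : is_partition P S) (P_indep : forall k, independent e (P k))
  (P_compl : forall k l, k != l -> complete_to e (P k) (P l)).

Lemma part_sub k w : w \in P k -> w \in S.
Proof. by case: P_part => _ _ -> wP; apply/existsP; exists k. Qed.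

Lemma contr_original_notin v : inl v \in contr_vertices t S -> v \notin S.
Proof. by rewrite inE. Qed.

Lemma contr_new_adj k l : k != l -> contr_rel e P (inr k) (inr l).
Proof.
case: P_part => P_ne _ _ nkl /=; rewrite nkl.
have /set0Pn[u uP] := P_ne k; have /set0Pn[w wP] := P_ne l.
by apply/existsP; exists u; rewrite uP; apply/existsP; exists w; rewrite wP (P_compl nkl).
Qed.

Lemma contr_rel_sym : symmetric (contr_rel e P).
Proof.
case=> [u|k] [v|l]; [exact: e_sym | by [] | by [] |].
case: (eqVneq k l) => [-> // | nkl].
by rewrite !contr_new_adj // eq_sym.
Qed.

Definition sees (w : T) (y : T + 'I_t) : bool := if y is inl v then e w v else true.

Section Embedding.
Variables (n : nat) (pat : rel nat) (f : 'I_n -> T + 'I_t).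
Hypotheses (f_inj : injective f) (f_in : forall i, f i \in contr_vertices t S)
  (f_adj : forall i j : 'I_n, contr_rel e P (f i) (f j) = pat i j).

Lemma embed_pat_sym (i j : 'I_n) : pat i j = pat j i.
Proof. by rewrite -!f_adj contr_rel_sym. Qed.

Lemma embed_original_notin j v : f j = inl v -> v \notin S.
Proof. by move=> fj; apply: contr_original_notin; rewrite -fj. Qed.

Lemma embed_original_adj (i j : 'I_n) u v :
  f i = inl u -> f j = inl v -> e u v = pat i j.
Proof. by move=> fi fj; rewrite -f_adj fi fj. Qed.

Definition represents (i : 'I_n) (w : T) : Prop :=
  match f i with
  | inl v => w = v
  | inr k => w \in P k /\ forall j : 'I_n, pat i j -> sees w (f j)
  end.

Lemma lift_induced (g : 'I_n -> T) : (forall i, represents i (g i)) ->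
  injective g /\ forall i j : 'I_n, e (g i) (g j) = pat i j.
Proof.
move=> g_rep.
have g_orig i v : f i = inl v -> g i = v.
  by move=> fi; have := g_rep i; rewrite /represents fi.
have g_new i k : f i = inr k -> g i \in P k /\ forall j : 'I_n, pat i j -> sees (g i) (f j).
  by move=> fi; have := g_rep i; rewrite /represents fi.
have g_notin i v : f i = inl v -> g i \notin S.
  by move=> fi; rewrite (g_orig _ _ fi); apply: embed_original_notin fi.
have mixed i j u l : f i = inl u -> f j = inr l -> e (g i) (g j) = pat i j.
  move=> fi fj; have [gjP gj_sees] := g_new _ _ fj.
  rewrite (g_orig _ _ fi) -f_adj fi fj /=.
  apply/idP/existsP => [eu | [w /andP[wP euw]]]; first by exists (g j); rewrite gjP.
  have := gj_sees i; rewrite fi /= e_sym; apply.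
  by rewrite -f_adj fj fi /=; apply/existsP; exists w; rewrite wP.
split=> [i j gij | i j]; case fi: (f i) => [u|k]; case fj: (f j) => [v|l].
- by apply: f_inj; rewrite fi fj -(g_orig _ _ fi) -(g_orig _ _ fj) gij.
- by have := g_notin _ _ fi; rewrite gij (part_sub (g_new _ _ fj).1).
- by have := g_notin _ _ fj; rewrite -gij (part_sub (g_new _ _ fi).1).
- apply: f_inj; rewrite fi fj; case: (eqVneq k l) => [-> // | nkl].
  case: P_part => _ P_disj _.
  by have := disjointFr (P_disj _ _ nkl) (g_new _ _ fi).1; rewrite gij (g_new _ _ fj).1.
- by rewrite (g_orig _ _ fi) (g_orig _ _ fj) -f_adj fi fj.
- exact: mixed fi fj.
- by rewrite e_sym embed_pat_sym; apply: mixed fj fi.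
- have [giP _] := g_new _ _ fi; have [gjP _] := g_new _ _ fj.
  rewrite -f_adj fi fj; case: (eqVneq k l) => [kl | nkl].
    have ij : i = j by apply: f_inj; rewrite fi fj kl.
    by rewrite ij e_irr /= kl eqxx.
  by rewrite (contr_new_adj nkl) (P_compl nkl giP gjP).
Qed.

Lemma embed_nonnbr_original i k (p : 'I_n) : f i = inr k ->
  p != i -> ~~ pat i p -> exists v, f p = inl v /\ forall w, w \in P k -> ~~ e w v.
Proof.
move=> fi npi nip; case fp: (f p) => [v|l].
  exists v; split=> // w wP; apply: contra nip => ewv.
  by rewrite -f_adj fi fp /=; apply/existsP; exists w; rewrite wP e_sym.
have nkl : k != l.
  by apply: contraNneq npi => kl; apply/eqP/f_inj; rewrite fp fi kl.
by move: nip; rewrite -f_adj fi fp (contr_new_adj nkl).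
Qed.

Lemma embed_nbr_sees i k (j : 'I_n) v :
  f i = inr k -> f j = inl v -> pat i j -> exists2 w, w \in P k & e w v.
Proof.
by move=> fi fj; rewrite -f_adj fi fj => /existsP[w /andP[wP evw]]; exists w; rewrite // e_sym.
Qed.

Lemma far_tail_P6 i k (j : 'I_n) b w1 w2 (p1 p2 : 'I_n) :
  f i = inr k -> f j = inl b -> far_tail pat i j p1 p2 ->
  w1 \in P k -> w2 \in P k -> e w2 b -> ~~ e w1 b ->
  has_induced [set: T] e 6 path_adj.
Proof.
move=> fi fj /and5P[/andP[np1i nip1] /andP[np2i nip2] p12 p2j np1j] w1P w2P e2b n1b.
have [l1 [fp1 N1]] := embed_nonnbr_original fi np1i nip1.
have [l2 [fp2 N2]] := embed_nonnbr_original fi np2i nip2.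
have el12 : e l1 l2 by rewrite (embed_original_adj fp1 fp2).
have el2b : e l2 b by rewrite (embed_original_adj fp2 fj).
have nl1b : ~~ e l1 b by rewrite (embed_original_adj fp1 fj).
exact: (separator_P6 (part_sub w1P) (part_sub w2P) (P_indep w1P w2P)
  (embed_original_notin fp1) (embed_original_notin fp2) (embed_original_notin fj)
  el12 el2b nl1b e2b n1b (N1 _ w1P) (N2 _ w1P) (N1 _ w2P) (N2 _ w2P)).
Qed.

Lemma no_representative_P6 i k : max_degree2 n pat -> far_tails n pat ->
  f i = inr k ->
  (forall w, w \in P k -> exists (j : 'I_n) v, [/\ pat i j, f j = inl v & ~~ e w v]) ->
  has_induced [set: T] e 6 path_adj.
Proof.
move=> deg2 tails fi miss.
have [w0 w0P] : exists w0, w0 \in P k by case: P_part => /(_ k)/set0Pn.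
have [j1 [a [ij1 fj1 _]]] := miss _ w0P.
have [w1 w1P e1a] := embed_nbr_sees fi fj1 ij1.
have [j2 [b [ij2 fj2 n1b]]] := miss _ w1P.
have n12 : j1 != j2.
  by apply: contraNneq n1b => j12; move: fj2; rewrite -j12 fj1 => -[<-].
have [w2 w2P e2b] := embed_nbr_sees fi fj2 ij2.
have [j3 [c [ij3 fj3 n2c]]] := miss _ w2P.
have n2a : ~~ e w2 a.
  have [j31|j32] := max_degree2P deg2 ij1 ij2 ij3 n12.
    by move: fj3 n2c; rewrite j31 fj1 => -[<-].
  by move: fj3 n2c; rewrite j32 fj2 => -[<-]; rewrite e2b.
have [p1 [p2 [tail1|tail2]]] := far_tailsP tails ij1 ij2 n12.
- exact: far_tail_P6 fi fj1 tail1 w2P w1P e1a n2a.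
- exact: far_tail_P6 fi fj2 tail2 w1P w2P e2b n1b.
Qed.

Lemma embedding_lifts : max_degree2 n pat -> far_tails n pat ->
  has_induced [set: T] e n pat \/ has_induced [set: T] e 6 path_adj.
Proof.
move=> deg2 tails.
pose has_rep i k := [exists w in P k, [forall j : 'I_n, pat i j ==> sees w (f j)]].
have [all_reps|] := boolP [forall i, forall k, (f i == inr k) ==> has_rep i k].
  have reps i : exists w, represents i w.
    rewrite /represents; case fi: (f i) => [v|k]; first by exists v.
    move: all_reps => /forallP/(_ i)/forallP/(_ k); rewrite fi eqxx /=.
    by case/existsP=> w /andP[wP /forallP w_sees]; exists w; split=> // j; apply/implyP.
  have [g /lift_induced[g_inj g_adj]] := fin_all_exists reps.
  by left; exists g; split=> //; split=> // i; rewrite inE.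
move=> /forallPn[i /forallPn[k]]; rewrite negb_imply => /andP[/eqP fi /existsPn no_rep].
right; apply: no_representative_P6 deg2 tails fi _ => w wP.
move: (no_rep w); rewrite wP /= => /forallPn[j]; rewrite negb_imply => /andP[ij].
by case fj: (f j) => [v|//] nwv; exists j, v.
Qed.

End Embedding.
End Contraction.
End Graph.

Theorem lemma3 (T : finType) (e : rel T) (S : {set T})
  (t : nat) (P : 'I_t -> {set T}) :
  simple_graph e ->
  connected_graph e ->
  P6C5_free [set: T] e ->
  chromatic_cutset e S ->
  minimal_separator e S ->
  is_partition P S ->
  (forall i, one_chromatic e (P i)) ->
  (forall i j, i != j -> complete_to e (P i) (P j)) ->
  P6C5_free (contr_vertices t S) (contr_rel e P).
Proof.
move=> [e_sym e_nloop] _ [noP6 noC5] _ S_minsep P_part P_onechr P_compl.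
have e_irr : irreflexive e by move=> x; apply/negbTE.
have P_indep k : independent e (P k) by case: (P_onechr k).
have lifts := embedding_lifts e_sym e_irr S_minsep P_part P_indep P_compl.
split=> -[f [f_inj [f_in f_adj]]].
- by case: (lifts 6 path_adj f f_inj f_in f_adj max_degree2_path6 far_tails_path6)
    => /noP6.
- by case: (lifts 5 (cycle_adj 5) f f_inj f_in f_adj max_degree2_cycle5 far_tails_cycle5)
    => [/noC5|/noP6].
Qed.
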